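(* Let $l,m,n\in\mathbb N$, $f:[l]\to[m]$, $g:[m]\to[n]$ and $H\in G[l]$. Then $(g\circ f)_{H*}=g_{Gf(H)*}\circ f_{H*}$ as maps $C(H)\to C(G(g\circ f)(H))$. Moreover, for every $l\in\mathbb N$ and $H\in G[l]$, $(\mathrm{id}_{[l]})_{H*}=\mathrm{id}_{C(H)}$.
   Context: $\mathbb N=\{0,1,2,\dots\}$, $[l]=\{0,\dots,l-1\}$. $G[l]$ is the set of hypergraphs on $[l]$, i.e. sets of non-empty subsets of $[l]$ (hyperedges); for $f:[l]\to[m]$, $Gf(H)=\{f(X)\mid X\in H\}$. $\mathsf A,\mathsf M$ are finite additive commutative monoids. For finite $X\subset\mathbb N$, $\mathsf A^X$ denotes functions $X\to\mathsf A$ and $\mathsf M^{\mathsf A^X}$ functions $\mathsf A^X\to\mathsf M$, both monoids under pointwise addition. For $\phi:X\to Y$ between finite subsets of $\mathbb N$, $\phi_\star:\mathsf A^X\to\mathsf A^Y$, $\phi_\star(w)(s)=\sum_{r\in X,\phi(r)=s}w(r)$, and $\phi_*:\mathsf M^{\mathsf A^X}\to\mathsf M^{\mathsf A^Y}$, $\phi_*(\varpi)(v)=\sum_{w:\phi_\star(w)=v}\varpi(w)$. A calibration $\varrho$ of $H\in G[l]$ assigns to each $X\in H$ an element $\varrho_X\in\mathsf M^{\mathsf A^X}$; $C(H)$ is the set of calibrations of $H$ (for $H=\emptyset$ it has exactly one element, the empty function). For $f:[l]\to[m]$, the push-forward $f_{H*}:C(H)\to C(Gf(H))$ is $f_{H*}(\varrho)_Y=\sum_{X\in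 H,\,f(X)=Y}(f|_X)_*(\varrho_X)$ for $Y\in Gf(H)$, where $f|_X:X\to f(X)$ is the restriction and the sum is taken in $\mathsf M^{\mathsf A^Y}$. *)

From HB Require Import structures.
From mathcomp Require Import all_boot all_algebra.
Set Implicit Arguments.
Unset Strict Implicit.
Unset Printing Implicit Defensive.
Import GRing.Theory.
Local Open Scope ring_scope.

(* [l] = 'I_l.  A, M : finite additive commutative monoids = finNmodType. *)

Definition elt (l : nat) (X : {set 'I_l}) : Type := {x : 'I_l | x \in X}.

Definition AX (A : finNmodType) (l : nat) (X : {set 'I_l}) := {ffun elt X -> A}.
Definition MAX (A M : finNmodType) (l : nat) (X : {set 'I_l}) :=
  {ffun AX A X -> M}.

Definition pstar (A : finNmodType) (I J : finType) (phi : I -> J)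
    (w : {ffun I -> A}) : {ffun J -> A} :=
  [ffun s => \sum_(r : I | phi r == s) w r].

Definition pshM (A M : finNmodType) (I J : finType) (phi : I -> J)
    (vp : {ffun {ffun I -> A} -> M}) : {ffun {ffun J -> A} -> M} :=
  [ffun v => \sum_(w : {ffun I -> A} | pstar phi w == v) vp w].

Definition hypergraph (l : nat) (H : {set {set 'I_l}}) : Prop :=
  forall X, X \in H -> X != set0.

Definition Gmap (l m : nat) (f : 'I_l -> 'I_m) (H : {set {set 'I_l}})
  : {set {set 'I_m}} := [set f @: X | X : {set 'I_l} in H].

Definition restr (l m : nat) (f : 'I_l -> 'I_m) (X : {set 'I_l})
    (x : elt X) : elt (f @: X) :=
  exist _ (f (val x)) (imset_f f (valP x)).

(* A calibration is represented as a (dependent) function giving a component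
   in M^(A^X) for every X; only components with X in H are meaningful, and
   equality of calibrations of H means equality of the components at X in H. *)
Definition calib (A M : finNmodType) (l : nat) := forall X : {set 'I_l}, MAX A M X.

Definition castMAX (A M : finNmodType) (l : nat) (X Y : {set 'I_l}) (e : X = Y)
  : MAX A M X -> MAX A M Y :=
  match e in _ = Y' return MAX A M X -> MAX A M Y' with erefl => id end.

Definition push (A M : finNmodType) (l m : nat) (f : 'I_l -> 'I_m)
    (H : {set {set 'I_l}}) (rho : calib A M l) : calib A M m :=
  fun Y => \sum_(X in H)
    match f @: X =P Y with
    | ReflectT e => castMAX e (pshM (restr f (X:=X)) (rho X))
    | ReflectF _ => 0
    end.

(* The restricted push-forward (f|_X)_* only depends on the ambient map f and
   the target edge, so we use a version indexed by f and an arbitrary target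
   edge Y; this removes the dependent cast along f(X) = Y.  Functoriality of
   this version is a regrouping of fibre sums: the fibre of g o f over y is
   the union of the fibres of f over the points of the fibre of g over y.
   Functoriality of push-forwards of calibrations then follows by regrouping
   the sum over the edges X of H according to their image f(X). *)

From HB Require Import structures.
From mathcomp Require Import all_boot all_algebra.

Set Implicit Arguments.
Unset Strict Implicit.
Unset Printing Implicit Defensive.
Import GRing.Theory.
Local Open Scope ring_scope.

Section EdgePushForward.
Variables (A M : finNmodType).

Definition pstar_edge l m (h : 'I_l -> 'I_m) (X : {set 'I_l}) (Y : {set 'I_m})
    (w : AX A X) : AX A Y :=
  [ffun y => \sum_(x : elt X | h (val x) == val y) w x].

Definition pshM_edge l m (h : 'I_l -> 'I_m) (X : {set 'I_l}) (Y : {set 'I_m})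
    (p : MAX A M X) : MAX A M Y :=
  [ffun v => \sum_(w : AX A X | pstar_edge h Y w == v) p w].

Lemma castMAX_pshM_restr l m (f : 'I_l -> 'I_m) (X : {set 'I_l}) Y
    (e : f @: X = Y) (p : MAX A M X) :
  castMAX e (pshM (restr f (X:=X)) p) = pshM_edge f Y p.
Proof.
case: Y / e; apply/ffunP => v; rewrite !ffunE; apply: eq_bigl => w.
by congr (_ == v); apply/ffunP => y; rewrite !ffunE.
Qed.

Lemma pushE l m (f : 'I_l -> 'I_m) H (rho : calib A M l) Y :
  push f H rho Y = \sum_(X in H | f @: X == Y) pshM_edge f Y (rho X).
Proof.
rewrite /push big_mkcondr; apply: eq_bigr => X _.
by case: (f @: X =P Y) => [e|//]; rewrite castMAX_pshM_restr.
Qed.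

Lemma pshM_edge_is_nmod_morphism l m (h : 'I_l -> 'I_m) X Y :
  nmod_morphism (@pshM_edge l m h X Y).
Proof.
split=> [|p q]; apply/ffunP => v; rewrite !ffunE.
  by rewrite big1 // => w _; rewrite ffunE.
by rewrite -big_split; apply: eq_bigr => w _; rewrite ffunE.
Qed.

HB.instance Definition _ l m (h : 'I_l -> 'I_m) X Y :=
  GRing.isNmodMorphism.Build (MAX A M X) (MAX A M Y) (@pshM_edge l m h X Y)
    (pshM_edge_is_nmod_morphism h X Y).

Lemma pstar_edge_comp l m n (f : 'I_l -> 'I_m) (g : 'I_m -> 'I_n) X Y
    (w : AX A X) :
  pstar_edge g Y (pstar_edge f (f @: X) w) = pstar_edge (g \o f) Y w.
Proof.
apply/ffunP => y; rewrite !ffunE.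
rewrite (partition_big (restr f (X:=X)) (fun z => g (val z) == val y)) //=.
apply: eq_bigr => z gz_y; rewrite ffunE; apply: eq_bigl => x.
rewrite -[restr f x == z]val_eqE /=.
by apply/eqP/andP => [fx_z|[_ /eqP //]]; rewrite fx_z gz_y.
Qed.

Lemma pshM_edge_comp l m n (f : 'I_l -> 'I_m) (g : 'I_m -> 'I_n) X Y
    (p : MAX A M X) :
  pshM_edge g Y (pshM_edge f (f @: X) p) = pshM_edge (g \o f) Y p.
Proof.
apply/ffunP => v; rewrite !ffunE.
under [RHS]eq_bigl do rewrite -pstar_edge_comp.
rewrite (partition_big (pstar_edge f (f @: X)) (fun u => pstar_edge g Y u == v)) //=.
apply: eq_bigr => u gu_v; rewrite ffunE; apply: eq_bigl => w.
by apply/eqP/andP => [fw_u|[_ /eqP //]]; rewrite fw_u gu_v eqxx.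
Qed.

Lemma pstar_edge_id l (X : {set 'I_l}) (w : AX A X) : pstar_edge id X w = w.
Proof. by apply/ffunP => y; rewrite ffunE (big_pred1 y) // => x; apply: val_eqE. Qed.

Lemma pshM_edge_id l (X : {set 'I_l}) (p : MAX A M X) : pshM_edge id X p = p.
Proof.
by apply/ffunP => v; rewrite ffunE (big_pred1 v) // => w; rewrite /= pstar_edge_id.
Qed.

Lemma push_comp l m n (f : 'I_l -> 'I_m) (g : 'I_m -> 'I_n) H
    (rho : calib A M l) Y :
  push (g \o f) H rho Y = push g (Gmap f H) (push f H rho) Y.
Proof.
rewrite !pushE.
under [RHS]eq_bigr do rewrite pushE raddf_sum.
rewrite (partition_big (fun X : {set 'I_l} => f @: X)
  (fun Z : {set 'I_m} => (Z \in Gmap f H) && (g @: Z == Y))) /=; last first.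
  by move=> X /andP[XH gfX_Y]; rewrite imset_f //= -imset_comp.
apply: eq_bigr => Z /andP[_ /eqP gZ_Y]; apply: eq_big => [X|X /andP[_ /eqP <-]].
  case: (f @: X =P Z) => [fX_Z|]; rewrite ?andbF // !andbT.
  by rewrite imset_comp fX_Z gZ_Y eqxx andbT.
by rewrite pshM_edge_comp.
Qed.

Lemma push_id l (H : {set {set 'I_l}}) (rho : calib A M l) X :
  X \in H -> push id H rho X = rho X.
Proof.
move=> XH; rewrite pushE (big_pred1 X) ?pshM_edge_id // => X'.
by rewrite /= imset_id andb_idl // => /eqP ->.
Qed.

End EdgePushForward.

Theorem proposition3p19 (A M : finNmodType) :
  (forall (l m n : nat) (f : 'I_l -> 'I_m) (g : 'I_m -> 'I_n)
          (H : {set {set 'I_l}}),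
     hypergraph H ->
     forall rho : calib A M l,
     forall Y : {set 'I_n}, Y \in Gmap (g \o f) H ->
       push (g \o f) H rho Y = push g (Gmap f H) (push f H rho) Y)
  /\
  (forall (l : nat) (H : {set {set 'I_l}}),
     hypergraph H ->
     forall rho : calib A M l,
     forall X : {set 'I_l}, X \in H -> push id H rho X = rho X).
Proof.
split=> [l m n f g H _ rho Y _ | l H _ rho X].
  exact: push_comp.
exact: push_id.
Qed.
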